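(* Fix a context-free grammar $G=(N,\Sigma,P,S)$. Let $M=(V,E,L)$ be a finite directed edge-labeled graph with $L\subseteq\Sigma$, $E\subseteq V\times L\times V$, and no two parallel edges with the same label, and let $V_s,V_f\subseteq V$ be sets of start and final vertices. Then the binarized Shared Packed Parse Forest (SPPF) built by the GLL-based graph parsing algorithm (described in the context) on $G$ and $M$ has at most $O(|V|^3+|E|)$ nodes and at most $O(|V|^3+|E|)$ edges, the constants depending only on $G$.
   Context: Paths and queries: a path in $M$ is a sequence of edges $(v_0,l_0,v_1),(v_1,l_1,v_2),\dots,(v_{n-1},l_{n-1},v_n)$ with $n\ge 1$; its word is $l_0l_1\cdots l_{n-1}$. The goal of the algorithm is to represent all paths $p$ from a vertex of $V_s$ to a vertex of $V_f$ whose word belongs to $\mathcal{L}(G)$, the language generated by $G$. The GLL-based graph parsing algorithm: it is the table-driven generalized LL (GLL) parsing algorithm in which input positions are vertices of $M$ instead of indices into a string. A grammar slot is a production with a dot, $X\to\alpha\cdot\beta$. The algorithm maintains a graph-structured stack (GSS) whose nodes are labeled by pairs (grammar slot, vertex); descriptors $(L,u,i,w)$ with $L$ a grammar slot, $u$ a GSS node, $i\in V$ the current position and $w$ an SPPF node (or a dummy); a working set $R$ of descriptors to process, a set $U$ of all descriptors ever created (a descriptor is added to $R$ only if it is not already in $U$), and a set $P$ of popped (GSS node, SPPF node) pairs. Initially $R$ contains one initial descriptor for each vertex in $V_s$. Processing a descriptor at slot $X\to\alpha\cdot x\beta$ at vertex $i$: if $x$ is a terminal, then for every outgoing edge $e$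 of $i$ with label $x$, the terminal SPPF node for $e$ is created/reused, combined with the current SPPF node, and a descriptor with slot $X\to\alpha x\cdot\beta$ and position the target of $e$ is added; if $x$ is a nonterminal, a GSS node for $(X\to\alpha x\cdot\beta, i)$ is created/reused (with an edge to the current GSS node labeled by the current SPPF node), and for every slot in the union, over outgoing edges $e$ of $i$, of the LL parse-table entries for $x$ and the label of $e$, a descriptor at position $i$ is added; at a slot $X\to\alpha\cdot$ the standard GLL pop operation is performed. All other operations (add, pop, create, SPPF node construction) are those of standard GLL. The algorithm terminates when $R$ is empty. The binarized SPPF: its nodes are of the following kinds, each created at most once per label: terminal nodes labeled $(v_0,T,v_1)$, created only when $(v_0,T,v_1)\in E$; $\varepsilon$-nodes labeled $(v,\varepsilon,v)$ with $v\in V$; nonterminal nodes labeled $(v_0,A,v_1)$ with $A\in N$, $v_0,v_1\in V$; intermediate nodes labeled $(v_0,t,v_1)$ with $t$ a grammar slot, $v_0,v_1\in V$; and packed nodes labeled $(A\to\alpha\cdot\beta, v)$ with $v\in V$, which are children of nonterminal or intermediate nodes and have at most two children. Nonterminal and intermediate nodes have only packed nodes as children. *)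

From Stdlib Require List.
From mathcomp Require Import all_boot.
Set Implicit Arguments. Unset Strict Implicit. Unset Printing Implicit Defensive.

Definition card_le {T : Type} (A : T -> Prop) (n : nat) : Prop :=
  exists l : seq T, size l <= n /\ forall x, A x -> List.In x l.

Section GLL.
(* Grammar G = (N, Sig, P, S): symbols are [inl a] (terminal) or [inr X]. *)
Variables (N Sig : finType) (P : seq (N * seq (Sig + N))) (S : N).
(* Graph M = (V, E, L): an edge (v, a, w) is [((v, a), w)]; E is a set, so
   there are no parallel edges with the same label. *)
Variables (V : finType) (E : {set V * Sig * V}) (Vs : {set V}).

Local Notation sym := (Sig + N)%type.
(* grammar slot X -> alpha . beta  is  ((X, alpha), beta) *)
Local Notation slot := (N * seq sym * seq sym)%type.

Inductive nullable_nt : N -> Prop :=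
| NullNT X g : (X, g) \in P -> nullable_seq g -> nullable_nt X
with nullable_seq : seq sym -> Prop :=
| NSnil : nullable_seq [::]
| NScons Y r : nullable_nt Y -> nullable_seq r -> nullable_seq (inr Y :: r).

Inductive first_nt (a : Sig) : N -> Prop :=
| FN X g : (X, g) \in P -> first_seq a g -> first_nt a X
with first_seq (a : Sig) : seq sym -> Prop :=
| FSt r : first_seq a (inl a :: r)
| FSn Y r : first_nt a Y -> first_seq a (inr Y :: r)
| FSskip Y r : nullable_nt Y -> first_seq a r -> first_seq a (inr Y :: r).

Inductive follow (a : Sig) : N -> Prop :=
| Fol1 Y al X be : (Y, al ++ inr X :: be) \in P -> first_seq a be -> follow a X
| Fol2 Y al X be : (Y, al ++ inr X :: be) \in P -> nullable_seq be ->
    follow a Y -> follow a X.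

(* LL(1) parse-table entry: slot X -> . g is in T[X, a] *)
Definition ll_table (X : N) (a : Sig) (g : seq sym) : Prop :=
  (X, g) \in P /\ (first_seq a g \/ (nullable_seq g /\ follow a X)).

Definition alts (i : V) (X : N) (g : seq sym) : Prop :=
  exists a j, ((i, a), j) \in E /\ ll_table X a g.

Inductive snode : Type :=
| STerm of V & Sig & V
| SEps of V
| SNT of V & N & V
| SInt of V & slot & V
| SPack of snode & slot & V.      (* packed child (t, k) of the given parent *)

Definition lext (n : snode) : V :=
  match n with
  | STerm v _ _ | SEps v | SNT v _ _ | SInt v _ _ => v
  | SPack _ _ k => k end.
Definition rext (n : snode) : V :=
  match n with
  | STerm _ _ v | SEps v | SNT _ _ v | SInt _ _ v => v
  | SPack _ _ k => k end.

Definition short (al : seq sym) : Prop :=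
  (exists a, al = [:: inl a]) \/ (exists Y, al = [:: inr Y] /\ ~ nullable_nt Y).

Definition ynode (t : slot) (w : option snode) (z : snode) : snode :=
  let q := match w with Some w' => lext w' | None => lext z end in
  match t.2 with
  | [::] => SNT q t.1.1 (rext z)
  | _ => SInt q t (rext z) end.
Definition pnode (t : slot) (w : option snode) (z : snode) : snode :=
  SPack (ynode t w z) t (lext z).

(* getNodeP(t, w, z) returns y, creating the nodes Ns and the edges Es
   (w = None is the dummy node $) *)
Inductive getNodeP (t : slot) (w : option snode) (z : snode) :
  snode -> (snode -> Prop) -> (snode * snode -> Prop) -> Prop :=
| GNP_skip : short t.1.2 -> t.2 <> [::] ->
    getNodeP t w z z (fun _ => False) (fun _ => False)
| GNP_make : ~ (short t.1.2 /\ t.2 <> [::]) ->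
    getNodeP t w z (ynode t w z)
      (fun n => n = ynode t w z \/ n = pnode t w z)
      (fun e => e = (ynode t w z, pnode t w z) \/ e = (pnode t w z, z) \/
                exists2 w', w = Some w' & e = (pnode t w z, w')).

(* GSS node: None is the base node u0, Some (L, i) the node labelled (L, i) *)
Definition gnode := option (slot * V).
(* descriptor label: None is the initial label (parse S), Some t a slot *)
Definition desc := (option slot * gnode * V * option snode)%type.

Record state := mkState {
  stR  : desc -> Prop;
  stU  : desc -> Prop;
  stP  : gnode * snode -> Prop;
  stGN : gnode -> Prop;
  stGE : gnode * option snode * gnode -> Prop;
  stSN : snode -> Prop;
  stSE : snode * snode -> Prop
}.

Definition empty {T : Type} : T -> Prop := fun _ => False.

Definition upd (s : state) (d : desc) (D : desc -> Prop)
  (Pn : gnode * snode -> Prop) (GNn : gnode -> Prop)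
  (GEn : gnode * option snode * gnode -> Prop)
  (Ns : snode -> Prop) (Es : snode * snode -> Prop) : state :=
  mkState (fun d' => (stR s d' /\ d' <> d) \/ (D d' /\ ~ stU s d'))
          (fun d' => stU s d' \/ D d')
          (fun p => stP s p \/ Pn p)
          (fun g => stGN s g \/ GNn g)
          (fun e => stGE s e \/ GEn e)
          (fun n => stSN s n \/ Ns n)
          (fun e => stSE s e \/ Es e).

Definition pop_desc (s : state) (u : gnode) (i : V) (z : snode) : desc -> Prop :=
  fun d' => exists L k, u = Some (L, k) /\
    exists w v y Ns Es, stGE s (u, w, v) /\ getNodeP L w z y Ns Es /\
      d' = (Some L, v, i, Some y).
Definition pop_P (u : gnode) (z : snode) : gnode * snode -> Prop :=
  fun p => u <> None /\ p = (u, z).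
Definition pop_N (s : state) (u : gnode) (z : snode) : snode -> Prop :=
  fun n => exists L k, u = Some (L, k) /\
    exists w v y Ns Es, stGE s (u, w, v) /\ getNodeP L w z y Ns Es /\ Ns n.
Definition pop_E (s : state) (u : gnode) (z : snode) : snode * snode -> Prop :=
  fun e => exists L k, u = Some (L, k) /\
    exists w v y Ns Es, stGE s (u, w, v) /\ getNodeP L w z y Ns Es /\ Es e.

Inductive process (s : state) : desc -> state -> Prop :=
| P_start u i w :
    process s (None, u, i, w)
      (upd s (None, u, i, w)
         (fun d' => exists2 g, alts i S g & d' = (Some ((S, [::]), g), u, i, None))
         empty empty empty empty empty)
| P_term X al a be u i w :
    let t' := ((X, rcons al (inl a)), be) in
    process s (Some ((X, al), inl a :: be), u, i, w)
      (upd s (Some ((X, al), inl a :: be), u, i, w)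
         (fun d' => exists j y Ns Es, ((i, a), j) \in E /\
             getNodeP t' w (STerm i a j) y Ns Es /\ d' = (Some t', u, j, Some y))
         empty empty empty
         (fun n => exists j y Ns Es, ((i, a), j) \in E /\
             getNodeP t' w (STerm i a j) y Ns Es /\ (n = STerm i a j \/ Ns n))
         (fun e => exists j y Ns Es, ((i, a), j) \in E /\
             getNodeP t' w (STerm i a j) y Ns Es /\ Es e))
| P_nonterm X al x be u i w :
    let t' := ((X, rcons al (inr x)), be) in
    let v : gnode := Some (t', i) in
    (* create(t', u, i, w): replay the popped pairs of v only if the
       GSS edge (v, w, u) is new *)
    let replay := ~ stGE s (v, w, u) in
    process s (Some ((X, al), inr x :: be), u, i, w)
      (upd s (Some ((X, al), inr x :: be), u, i, w)
         (fun d' =>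
            (replay /\ exists z y Ns Es, stP s (v, z) /\ getNodeP t' w z y Ns Es /\
                 d' = (Some t', u, rext z, Some y))
            \/ (exists2 g, alts i x g & d' = (Some ((x, [::]), g), v, i, None)))
         empty
         (fun g => g = v)
         (fun e => e = (v, w, u))
         (fun n => replay /\ exists z y Ns Es, stP s (v, z) /\
                     getNodeP t' w z y Ns Es /\ Ns n)
         (fun e => replay /\ exists z y Ns Es, stP s (v, z) /\
                     getNodeP t' w z y Ns Es /\ Es e))
| P_end_eps X al u i y Ns Es :
    getNodeP ((X, al), [::]) None (SEps i) y Ns Es ->
    process s (Some ((X, al), [::]), u, i, None)
      (upd s (Some ((X, al), [::]), u, i, None)
         (pop_desc s u i y) (pop_P u y) empty empty
         (fun n => n = SEps i \/ Ns n \/ pop_N s u y n)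
         (fun e => Es e \/ pop_E s u y e))
| P_end X al u i z :
    process s (Some ((X, al), [::]), u, i, Some z)
      (upd s (Some ((X, al), [::]), u, i, Some z)
         (pop_desc s u i z) (pop_P u z) empty empty
         (pop_N s u z) (pop_E s u z)).

Definition init_state : state :=
  mkState (fun d => exists2 v, v \in Vs & d = (None, None, v, None))
          (fun d => exists2 v, v \in Vs & d = (None, None, v, None))
          empty (fun g => g = None) empty empty empty.

Definition step (s s' : state) : Prop :=
  exists2 d, stR s d & process s d s'.

(* states reachable during a run of the algorithm (any order of
   processing the descriptors of R) *)
Inductive reachable : state -> Prop :=
| Reach0 : reachable init_state
| ReachS s s' : reachable s -> step s s' -> reachable s'.

End GLL.

From Stdlib Require List.
From mathcomp Require Import all_boot zify.
Set Implicit Arguments. Unset Strict Implicit. Unset Printing Implicit Defensive.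

(* A symbol node is determined by its label and its two extents, so there
   are O(|V|^2) of them; a packed node (t, k) below a parent (q, t, r) is
   determined by t, q, k, r, so there are O(|V|^3) of them.  The algorithm
   keeps the extents consistent: the right child z of such a packed node
   spans k..r and its left child w (the node of the already parsed prefix,
   carried by descriptors and GSS edges) spans q..k.  Hence every packed
   node has O(1) possible children, and there are O(|V|^3) edges. *)

Lemma card_leW (T : Type) (A B : T -> Prop) m n :
  card_le B m -> (forall x, A x -> B x) -> m <= n -> card_le A n.
Proof.
case=> l [Hl HB] HAB Hmn; exists l; split; first exact: leq_trans Hmn.
by move=> x /HAB /HB.
Qed.

Lemma card_leU (T : Type) (A B : T -> Prop) m n :
  card_le A m -> card_le B n -> card_le (fun x => A x \/ B x) (m + n).
Proof.
case=> [l [Hl HA]] [l' [Hl' HB]]; exists (l ++ l').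
split; first by rewrite size_cat leq_add.
by move=> x [/HA|/HB] Hx; apply/List.in_app_iff; [left | right].
Qed.

Lemma card_leX (T U : Type) (A : T -> Prop) (B : U -> Prop) m n :
  card_le A m -> card_le B n -> card_le (fun p => A p.1 /\ B p.2) (m * n).
Proof.
case=> [l [Hl HA]] [l' [Hl' HB]]; exists (List.list_prod l l'); split.
  have -> : size (List.list_prod l l') = size l * size l' := List.length_prod l l'.
  exact: leq_mul.
by case=> x y /= [/HA Hx /HB Hy]; exact: List.in_prod.
Qed.

Lemma card_le_image (T U : Type) (f : T -> U) (A : T -> Prop) n :
  card_le A n -> card_le (fun y => exists2 x, A x & y = f x) n.
Proof.
case=> l [Hl HA]; exists (map f l); split; first by rewrite size_map.
by move=> _ [x /HA Hx ->]; exact: List.in_map.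
Qed.

Lemma card_le_mem (T : eqType) (A : T -> Prop) (s : seq T) :
  (forall x, A x -> x \in s) -> card_le A (size s).
Proof.
move=> HA; exists s; split=> // x /HA; elim: s {HA} => //= y s IH.
by rewrite in_cons => /predU1P [->|/IH]; [left | right].
Qed.

Lemma card_le_fin (T : finType) : card_le (fun _ : T => True) #|T|.
Proof. by rewrite cardE; apply: card_le_mem => x _; rewrite mem_enum. Qed.

Section SPPFBound.

Variables (N Sig : finType) (P : seq (N * seq (Sig + N))) (S : N).
Variables (V : finType) (E : {set V * Sig * V}) (Vs : {set V}).

Local Notation sym := (Sig + N)%type.
Local Notation slot := (N * seq sym * seq sym)%type.
Local Notation snode := (snode N Sig V).
Local Notation gnode := (gnode N Sig V).

Definition is_slot (t : slot) : Prop := (t.1.1, t.1.2 ++ t.2) \in P.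

Definition slot_node (t : slot) (q r : V) : snode :=
  if t.2 is [::] then SNT Sig q t.1.1 r else SInt q t r.

Definition symbol_node (n : snode) : Prop :=
  match n with SInt _ t _ => is_slot t | SPack _ _ _ => False | _ => True end.

Definition packed_node (n : snode) : Prop :=
  exists t q r k, is_slot t /\ n = SPack (slot_node t q r) t k.

Definition sppf_node (n : snode) : Prop := symbol_node n \/ packed_node n.

Definition sppf_edge (e : snode * snode) : Prop :=
  exists2 t, is_slot t &
    [\/ exists q r k, e = (slot_node t q r, SPack (slot_node t q r) t k),
        exists q z, symbol_node z /\
          e = (SPack (slot_node t q (rext z)) t (lext z), z)
      | exists r w, symbol_node w /\
          e = (SPack (slot_node t (lext w) r) t (rext w), w)].

Lemma symbol_slot_node t q r : is_slot t -> symbol_node (slot_node t q r).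
Proof. by rewrite /slot_node; case: t.2. Qed.

Lemma lext_slot_node t q r : lext (slot_node t q r) = q.
Proof. by rewrite /slot_node; case: t.2. Qed.

Lemma rext_slot_node t q r : rext (slot_node t q r) = r.
Proof. by rewrite /slot_node; case: t.2. Qed.

Definition olext (w : option snode) (k : V) : V :=
  if w is Some w' then lext w' else k.

Definition prefix_ok (w : option snode) (k : V) : Prop :=
  if w is Some w' then symbol_node w' /\ rext w' = k else True.

Definition gnode_at (u : gnode) (k : V) : Prop :=
  if u is Some (_, k') then k' = k else True.

Definition desc_ok (d : desc N Sig V) : Prop :=
  let '(l, u, i, w) := d in
  if l is Some t then
    [/\ is_slot t, t.1.2 = [::] -> w = None, prefix_ok w i
      & gnode_at u (olext w i)]
  else u = None.

Definition popped_ok (p : gnode * snode) : Prop :=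
  symbol_node p.2 /\ gnode_at p.1 (lext p.2).

(* For a one-symbol prefix getNodeP returns z itself, which is only
   consistent when there is no left sibling w. *)
Definition gss_edge_ok (e : gnode * option snode * gnode) : Prop :=
  let '(u, w, v) := e in
  if u is Some (L, k) then
    [/\ is_slot L, L.1.2 <> [::], size L.1.2 = 1 -> w = None, prefix_ok w k
      & gnode_at v (olext w k)]
  else True.

Record inv (s : state N Sig V) : Prop := Inv {
  inv_R : forall d, stR s d -> desc_ok d;
  inv_P : forall p, stP s p -> popped_ok p;
  inv_GE : forall e, stGE s e -> gss_edge_ok e;
  inv_SN : forall n, stSN s n -> sppf_node n;
  inv_SE : forall e, stSE s e -> sppf_edge e }.

Lemma getNodeP_sppf t w z y Ns Es :
  getNodeP P t w z y Ns Es -> is_slot t -> symbol_node z ->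
  prefix_ok w (lext z) -> (size t.1.2 = 1 -> w = None) ->
  [/\ symbol_node y, lext y = olext w (lext z), rext y = rext z,
      forall n, Ns n -> sppf_node n & forall e, Es e -> sppf_edge e].
Proof.
case=> [Hshort _ | _] Ht Hz Hw Hw1.
  have -> : w = None by apply: Hw1; case: Hshort => [[a ->] | [Y [-> _]]].
  by [].
have Ey : ynode t w z = slot_node t (olext w (lext z)) (rext z) by [].
rewrite /pnode Ey lext_slot_node rext_slot_node; split=> //.
- exact: symbol_slot_node.
- move=> n [-> | ->]; first by left; exact: symbol_slot_node.
  by right; exists t, (olext w (lext z)), (rext z), (lext z).
- move=> e He; exists t => //.
  case: He => [-> | [-> | [w' Ew ->]]]; first by apply: Or31; do 3 eexists.
    by apply: Or32; exists (olext w (lext z)), z.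
  move: Hw; rewrite Ew /= => -[Hw' Rw'].
  by apply: Or33; exists (rext z), w'; rewrite Rw'.
Qed.

Lemma getNodeP_desc t k w u z y Ns Es :
  gss_edge_ok (Some (t, k), w, u) -> getNodeP P t w z y Ns Es ->
  symbol_node z -> lext z = k ->
  [/\ desc_ok (Some t, u, rext z, Some y),
      forall n, Ns n -> sppf_node n & forall e, Es e -> sppf_edge e].
Proof.
move=> [Ht Hne Hw1 Hw Hu] G Hz Lz; subst k.
have [Hy Ly Ry HN HE] := getNodeP_sppf G Ht Hz Hw Hw1.
by split=> //; split=> //=; rewrite Ly.
Qed.

Lemma desc_ok_next X al x be u i w :
  desc_ok (Some ((X, al), x :: be), u, i, w) ->
  gss_edge_ok (Some (((X, rcons al x), be), i), w, u).
Proof.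
move=> [Ht Hnil Hw Hu]; split=> //.
- by rewrite /is_slot /= cat_rcons.
- by case: (al).
- by rewrite size_rcons; case: (al) Hnil => // /(_ erefl).
Qed.

Lemma alts_is_slot i X g : alts P E i X g -> is_slot ((X, [::]), g).
Proof. by case=> a [j [_ [Hg _]]]. Qed.

Lemma pop_ok s u i z :
  (forall e, stGE s e -> gss_edge_ok e) ->
  symbol_node z -> rext z = i -> gnode_at u (lext z) ->
  [/\ forall d, pop_desc P s u i z d -> desc_ok d,
      forall p, pop_P u z p -> popped_ok p,
      forall n, pop_N P s u z n -> sppf_node n
    & forall e, pop_E P s u z e -> sppf_edge e].
Proof.
move=> HGE Hz <- Hu.
have pop_step L k w v y Ns Es : u = Some (L, k) -> stGE s (u, w, v) ->
    getNodeP P L w z y Ns Es ->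
    [/\ desc_ok (Some L, v, rext z, Some y),
        forall n, Ns n -> sppf_node n & forall e, Es e -> sppf_edge e].
  move=> Eu /HGE HL G; rewrite Eu in HL Hu.
  exact: getNodeP_desc HL G Hz (esym Hu).
split.
- move=> _ [L [k [Eu [w [v [y [Ns [Es [Hge [G ->]]]]]]]]]].
  by case: (pop_step _ _ _ _ _ _ _ Eu Hge G).
- by move=> _ [_ ->].
- move=> n [L [k [Eu [w [v [y [Ns [Es [Hge [G Hn]]]]]]]]]].
  by case: (pop_step _ _ _ _ _ _ _ Eu Hge G) => _ /(_ n Hn).
- move=> e [L [k [Eu [w [v [y [Ns [Es [Hge [G He]]]]]]]]]].
  by case: (pop_step _ _ _ _ _ _ _ Eu Hge G) => _ _ /(_ e He).
Qed.

Lemma inv_upd s d D Pn GNn GEn Ns Es : inv s ->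
  (forall d', D d' -> desc_ok d') -> (forall p, Pn p -> popped_ok p) ->
  (forall e, GEn e -> gss_edge_ok e) -> (forall n, Ns n -> sppf_node n) ->
  (forall e, Es e -> sppf_edge e) -> inv (upd s d D Pn GNn GEn Ns Es).
Proof.
case=> HR HP HGE HSN HSE HD HPn HGEn HNs HEs; split=> /=.
- by move=> d' [[/HR] | [/HD]].
- by move=> p [/HP | /HPn].
- by move=> e [/HGE | /HGEn].
- by move=> n [/HSN | /HNs].
- by move=> e [/HSE | /HEs].
Qed.

Lemma process_inv s d s' :
  inv s -> desc_ok d -> process P S E s d s' -> inv s'.
Proof.
move=> Is Hd Hp; case: Hp Hd.
- move=> u i w /= Hu; apply: inv_upd => // _ [g Hg ->].
  by rewrite Hu; split=> //; exact: alts_is_slot Hg.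
- move=> X al a be u i w t' /desc_ok_next He.
  have term j y Ns Es (G : getNodeP P t' w (STerm N i a j) y Ns Es) :=
    getNodeP_desc He G I erefl.
  apply: inv_upd => //.
  + by move=> _ [j [y [Ns [Es [_ [G ->]]]]]]; case: (term j y Ns Es G).
  + move=> n [j [y [Ns [Es [_ [G [-> | Hn]]]]]]]; first by left.
    by case: (term j y Ns Es G) => _ /(_ n Hn).
  + move=> e [j [y [Ns [Es [_ [G He']]]]]].
    by case: (term j y Ns Es G) => _ _ /(_ e He').
- move=> X al x be u i w t' v replay /desc_ok_next He.
  have replay_ok z y Ns Es : stP s (v, z) -> getNodeP P t' w z y Ns Es ->
      [/\ desc_ok (Some t', u, rext z, Some y),
          forall n, Ns n -> sppf_node n & forall e, Es e -> sppf_edge e].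
    by move=> /(inv_P Is) [Hz Lz] G; exact: getNodeP_desc He G Hz (esym Lz).
  apply: inv_upd => //.
  + move=> _ [[_ [z [y [Ns [Es [Hz [G ->]]]]]]] | [g Hg ->]].
      by case: (replay_ok z y Ns Es Hz G).
    by split=> //; exact: alts_is_slot Hg.
  + by move=> _ ->.
  + move=> n [_ [z [y [Ns [Es [Hz [G Hn]]]]]]].
    by case: (replay_ok z y Ns Es Hz G) => _ /(_ n Hn).
  + move=> e [_ [z [y [Ns [Es [Hz [G He']]]]]]].
    by case: (replay_ok z y Ns Es Hz G) => _ _ /(_ e He').
- move=> X al u i y Ns Es G [Ht _ _ Hu].
  have [Hy Ly Ry HN HE] := getNodeP_sppf G Ht I I (fun _ => erefl).
  have Hu' : gnode_at u (lext y) by rewrite Ly.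
  have [Hpd HpP HpN HpE] := pop_ok (inv_GE Is) Hy Ry Hu'.
  apply: inv_upd => //.
  + by move=> n [-> | [/HN | /HpN]] //; left.
  + by move=> e [/HE | /HpE].
- move=> X al u i z [_ _ [Hz Rz] Hu].
  by have [? ? ? ?] := pop_ok (inv_GE Is) Hz Rz Hu; apply: inv_upd.
Qed.

Lemma reachable_inv s : reachable P S E Vs s -> inv s.
Proof.
elim=> [|s0 s1 _ Is [d Hd Hp]]; last exact: process_inv Is (inv_R Is Hd) Hp.
by split=> //= _ [v _ ->].
Qed.

Definition slots : seq slot :=
  [seq ((p.1, take n p.2), drop n p.2) | p <- P, n <- iota 0 (size p.2).+1].

Definition n_symbol_labels : nat := (#|Sig| + #|N| + size slots).+1.

Lemma slots_mem t : is_slot t -> t \in slots.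
Proof.
case: t => [[X al] be]; rewrite /is_slot /= => Ht.
have Hal : size al \in iota 0 (size (al ++ be)).+1.
  by rewrite mem_iota ltnS size_cat leq_addr.
have := allpairs_f_dep (fun p n => ((p.1, take n p.2), drop n p.2))
  (t := fun p => iota 0 (size p.2).+1) Ht Hal.
by rewrite /= take_size_cat // drop_size_cat.
Qed.

Lemma card_le_is_slot : card_le is_slot (size slots).
Proof. exact: card_le_mem slots_mem. Qed.

Lemma card_le_VTV (T : finType) :
  card_le (fun _ : V * T * V => True) (#|V| * #|T| * #|V|).
Proof. by rewrite -!card_prod; exact: card_le_fin. Qed.

Lemma card_le_symbol_node :
  card_le symbol_node (n_symbol_labels * #|V| ^ 2).
Proof.
have Hslot : card_le (fun x : V * slot * V => is_slot x.1.2)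
    (#|V| * size slots * #|V|).
  apply: card_leW (card_leX (card_leX (card_le_fin V) card_le_is_slot)
    (card_le_fin V)) _ _ => //.
apply: card_leW (card_leU (card_leU (card_leU
    (card_le_image (fun x => STerm N x.1.1 x.1.2 x.2) (card_le_VTV Sig))
    (card_le_image (@SEps N Sig V) (card_le_fin V)))
    (card_le_image (fun x => SNT Sig x.1.1 x.1.2 x.2) (card_le_VTV N)))
    (card_le_image (fun x => SInt x.1.1 x.1.2 x.2) Hslot)) _ _.
  case=> [i a j | k | q X r | q t r | //] Hn.
  - by left; left; left; exists (i, a, j).
  - by left; left; right; exists k.
  - by left; right; exists (q, X, r).
  - by right; exists (q, t, r).
rewrite /n_symbol_labels; nia.
Qed.

Lemma card_le_slot_VVV :
  card_le (fun x : slot * V * V * V => is_slot x.1.1.1) (size slots * #|V| ^ 3).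
Proof.
apply: card_leW (card_leX (card_leX (card_leX card_le_is_slot
  (card_le_fin V)) (card_le_fin V)) (card_le_fin V)) _ _ => //.
by rewrite !expnS expn0 muln1 !mulnA.
Qed.

Lemma card_le_sppf_node :
  card_le sppf_node ((n_symbol_labels + size slots) * #|V| ^ 3).
Proof.
apply: card_leW (card_leU card_le_symbol_node (card_le_image
  (fun x => SPack (slot_node x.1.1.1 x.1.1.2 x.1.2) x.1.1.1 x.2)
  card_le_slot_VVV)) _ _.
  move=> n [Hn | [t [q [r [k [Ht ->]]]]]]; first by left.
  by right; exists (t, q, r, k).
nia.
Qed.

Lemma card_le_sppf_edge :
  card_le sppf_edge (size slots * (2 * n_symbol_labels).+1 * #|V| ^ 3).
Proof.
have Hchild := card_leX (card_leX card_le_is_slot (card_le_fin V))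
  card_le_symbol_node.
apply: card_leW (card_leU (card_leU
    (card_le_image (fun x => (slot_node x.1.1.1 x.1.1.2 x.1.2,
       SPack (slot_node x.1.1.1 x.1.1.2 x.1.2) x.1.1.1 x.2)) card_le_slot_VVV)
    (card_le_image (fun x => (SPack (slot_node x.1.1 x.1.2 (rext x.2)) x.1.1
       (lext x.2), x.2)) Hchild))
    (card_le_image (fun x => (SPack (slot_node x.1.1 (lext x.2) x.1.2) x.1.1
       (rext x.2), x.2)) Hchild)) _ _.
  move=> e [t Ht [[q [r [k ->]]] | [q [z [Hz ->]]] | [r [w [Hw ->]]]]].
  - by left; left; exists (t, q, r, k).
  - by left; right; exists (t, q, z).
  - by right; exists (t, r, w).
nia.
Qed.

End SPPFBound.

Theorem theorem2 (N Sig : finType) (P : seq (N * seq (Sig + N))) (S : N) :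
  exists c : nat,
    forall (V : finType) (E : {set V * Sig * V}) (Vs Vf : {set V})
           (s : state N Sig V),
      reachable P S E Vs s ->
      card_le (stSN s) (c * (#|V| ^ 3 + #|E|)) /\
      card_le (stSE s) (c * (#|V| ^ 3 + #|E|)).
Proof.
set cN := n_symbol_labels P + size (slots P).
set cE := size (slots P) * (2 * n_symbol_labels P).+1.
exists (maxn cN cE) => V E Vs Vf s Hs.
have Is := reachable_inv Hs.
split.
- apply: card_leW (card_le_sppf_node P V) (inv_SN Is) _.
  by rewrite leq_mul ?leq_maxl ?leq_addr.
- apply: card_leW (card_le_sppf_edge P V) (inv_SE Is) _.
  by rewrite leq_mul ?leq_maxr ?leq_addr.
Qed.
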